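(* Let $p\in(0,1)$ and let $(\lambda_n)_{n\ge1}$ be a sequence with $\lambda_1=1$ and $0\le\lambda_n\le\lambda_{n-1}$ for all $n>1$. Let $r_1,r_2,\dots$ be $\{0,1\}$-valued random variables with $\Pr(r_1=1)=p$ and, for every $n\ge2$, $\Pr(r_n=1\mid r_1,\dots,r_{n-1})=\lambda_n p+(1-\lambda_n)\bar p_{n-1}$, where $\bar p_m=\frac1m\sum_{i=1}^m r_i$. Then for every $n\ge1$, $\mathbb{E}[\bar p_n]=\mathbb{E}[r_n]=p$.
   Context: This is a model of the bandwagon effect: $r_n$ is the $n$-th binary rating of an item, $p$ the true preference, $\bar p_m$ the sample mean of the first $m$ ratings, and $\lambda_n$ the weight the $n$-th user puts on their own preference versus the current sample mean. *)

From HB Require Import structures.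
From mathcomp Require Import all_boot all_order all_algebra.
From mathcomp Require Import all_classical all_reals all_analysis.
Set Implicit Arguments. Unset Strict Implicit. Unset Printing Implicit Defensive.
Import Order.TTheory GRing.Theory Num.Theory.
Local Open Scope classical_set_scope.
Local Open Scope ring_scope.

(* Ratings are 1-indexed: r n is r_n for n >= 1 (r 0 is unused). *)

Definition pbar {T : Type} {R : realType} (r : nat -> T -> R) (m : nat) (w : T) : R :=
  (\sum_(i < m) r i.+1 w) / m%:R.

Definition hist_event {T : Type} {R : realType} (r : nat -> T -> R) (s : seq bool) : set T :=
  [set w | forall i, (i < size s)%N -> r i.+1 w = (nth false s i)%:R].

(* the sample mean of a history s (the value of \bar p_{size s} on hist_event r s) *)
Definition seq_mean {R : realType} (s : seq bool) : R :=
  (\sum_(i < size s) ((nth false s i)%:R : R)) / (size s)%:R.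

From HB Require Import structures.
From mathcomp Require Import all_boot all_order all_algebra.
From mathcomp Require Import all_classical all_reals all_analysis.
From mathcomp Require Import measurable_realfun.
Import Order.TTheory GRing.Theory Num.Theory.
Local Open Scope classical_set_scope.
Local Open Scope ring_scope.

(* Conditioning on the first n - 1 ratings, i.e. summing over the 2^(n-1)
   histories s, turns the hypothesis on r_n into
     E[r_n] = lam_n p + (1 - lam_n) E[pbar_(n-1)],
   since pbar_(n-1) equals seq_mean s on the event of history s.  By strong
   induction E[r_i] = p for all i < n, hence E[pbar_(n-1)] = p by linearity,
   and so E[r_n] = p as well. *)

Fixpoint histories (k : nat) : seq (seq bool) :=
  if k is k'.+1 then flatten [seq [:: rcons s false; rcons s true] | s <- histories k']
  else [:: [::]].

Lemma size_histories k s : s \in histories k -> size s = k.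
Proof.
elim: k s => [|k IH] s /=; first by rewrite inE => /eqP ->.
case/flatten_mapP => t /IH <-; rewrite !inE => /orP [] /eqP ->; by rewrite size_rcons.
Qed.

Arguments size_histories {k s}.

Section BinaryRatings.
Variables (d : measure_display) (T : measurableType d) (R : realType)
  (P : probability T R) (r : nat -> {RV P >-> R}).
Hypothesis r01 : forall n w, (1 <= n)%N -> r n w = 0 \/ r n w = 1.

Local Notation H := (hist_event (fun k => (r k : T -> R))).
Local Notation mean := (pbar (fun k => (r k : T -> R))).

Lemma measurable_rating_eq n (c : R) : measurable [set w | r n w = c].
Proof.
have := measurable_funPT (r n) measurableT [set c] (measurable_set1 c).
by rewrite setTI.
Qed.

Lemma hist_event_nil : H [::] = setT.
Proof. by apply/seteqP; split=> w // _ i. Qed.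

Lemma hist_event_rcons s b :
  H (rcons s b) = H s `&` [set w | r (size s).+1 w = b%:R].
Proof.
apply/seteqP; split=> w /=.
- move=> h; split; last first.
    by have := h (size s); rewrite size_rcons ltnSn nth_rcons ltnn eqxx; apply.
  by move=> i Hi; have := h i; rewrite size_rcons nth_rcons Hi; apply; exact: leqW.
- case=> h1 h2 i; rewrite size_rcons ltnS leq_eqVlt => /orP [/eqP->|Hi].
    by rewrite nth_rcons ltnn eqxx.
  by rewrite nth_rcons Hi; apply: h1.
Qed.

Lemma measurable_hist_event s : measurable (H s).
Proof.
elim/last_ind: s => [|s b IH]; first by rewrite hist_event_nil.
by rewrite hist_event_rcons; apply: measurableI => //; exact: measurable_rating_eq.
Qed.

Lemma hist_event_rconsU s : H s = H (rcons s false) `|` H (rcons s true).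
Proof.
rewrite !hist_event_rcons -setIUr.
suff -> : [set w | r (size s).+1 w = false%:R] `|` [set w | r (size s).+1 w = true%:R]
    = setT by rewrite setIT.
apply/seteqP; split=> w // _ /=.
by case: (r01 (size s).+1 w isT) => ->; [left|right].
Qed.

Lemma hist_event_rcons_disjoint s :
  [disjoint H (rcons s false) & H (rcons s true)].
Proof.
apply/disj_setPS; rewrite !hist_event_rcons => w [[_ h0] [_ h1]].
by have := etrans (esym h0) h1 => /= /eqP; rewrite eq_sym oner_eq0.
Qed.

Lemma integral_histories (k : nat) (f : T -> \bar R) :
  measurable_fun [set: T] f -> (forall x, 0 <= f x)%E ->
  (\int[P]_x f x = \sum_(s <- histories k) \int[P]_(x in H s) f x)%E.
Proof.
move=> mf f0; elim: k => [|k IH]; first by rewrite /= big_seq1 hist_event_nil.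
rewrite IH /= big_flatten big_map /=; apply: eq_bigr => s _.
rewrite big_cons big_seq1 {1}(hist_event_rconsU s) ge0_integral_setU //.
- exact: measurable_hist_event.
- exact: measurable_hist_event.
- exact: measurable_funS mf.
- exact: hist_event_rcons_disjoint.
Qed.

Definition hist_prob s := fine (P (H s)).

Lemma hist_probE s : P (H s) = (hist_prob s)%:E.
Proof.
by rewrite /hist_prob fineK //; apply: fin_num_measure; exact: measurable_hist_event.
Qed.

Lemma integral_cst_hist_event s (c : R) :
  (\int[P]_(x in H s) (cst c%:E) x = (c * hist_prob s)%:E)%E.
Proof.
rewrite integral_cst; last exact: measurable_hist_event.
by rewrite EFinM /hist_prob fineK //; apply: fin_num_measure; exact: measurable_hist_event.
Qed.

Lemma sum_hist_prob k : \sum_(s <- histories k) hist_prob s = 1.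
Proof.
have := @integral_histories k (cst 1%E) (measurable_cst _) (fun _ => lee01).
have P_setT : ((P : {measure set T -> \bar R}) [set: T] = 1)%E by exact: probability_setT.
rewrite integral_cst // P_setT mule1.
under eq_bigr => s _ do rewrite integral_cst_hist_event mul1r.
rewrite sumEFin => h; apply: EFin_inj; by rewrite -h.
Qed.

Lemma expectation_pbar_histories k :
  ('E_P[mean k] = (\sum_(s <- histories k) seq_mean s * hist_prob s)%:E)%E.
Proof.
rewrite unlock (integral_histories k).
- rewrite -sumEFin big_seq [RHS]big_seq; apply: eq_bigr => s Hs.
  rewrite -integral_cst_hist_event; apply: eq_integral => w; rewrite inE => Hw.
  rewrite /pbar /seq_mean (size_histories Hs) /=; congr ((_ / _)%:E).
  by apply: eq_bigr => i _; apply: Hw; rewrite (size_histories Hs).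
- apply/measurable_EFinP; rewrite /pbar.
  apply: (@measurable_funM _ _ _ _ (fun w => \sum_(i < k) r i.+1 w) (cst _)) => //.
  by apply: measurable_sum => i; exact: measurable_funPT.
- move=> w /=; rewrite lee_fin /pbar; apply: divr_ge0 => //.
  by apply: sumr_ge0 => i _; case: (r01 i.+1 w isT) => ->.
Qed.

Lemma expectation_rating_histories n k (c : seq bool -> R) : (1 <= n)%N ->
  (forall s, size s = k ->
     P (H s `&` [set w | r n w = 1]) = ((c s)%:E * P (H s))%E) ->
  ('E_P[r n] = (\sum_(s <- histories k) c s * hist_prob s)%:E)%E.
Proof.
move=> n1 hc; rewrite unlock (integral_histories k).
- rewrite -sumEFin big_seq [RHS]big_seq; apply: eq_bigr => s Hs.
  have rn_indic w : (r n w)%:E = (\1_[set w | r n w = 1] w)%:E.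
    rewrite indicE; case: (r01 n w n1) => h; last by rewrite mem_set /= h.
    by rewrite memNset ?h //= h => /eqP; rewrite eq_sym oner_eq0.
  under eq_integral => w _ do rewrite rn_indic.
  rewrite integral_indic; [|exact: measurable_hist_event|exact: measurable_rating_eq].
  rewrite setIC; transitivity ((c s)%:E * P (H s))%E; first exact: hc (size_histories Hs).
  by rewrite hist_probE EFinM.
- by apply/measurable_EFinP; exact: measurable_funPT.
- by move=> w /=; rewrite lee_fin; case: (r01 n w n1) => ->.
Qed.

Lemma expectation_rating_affine n (a b : R) :
  (forall s, size s = n -> P (H s `&` [set w | r n.+1 w = 1]) =
                          ((a + b * seq_mean s)%:E * P (H s))%E) ->
  ('E_P[r n.+1] = a%:E + b%:E * 'E_P[mean n])%E.
Proof.
move=> hc; rewrite (@expectation_rating_histories n.+1 n _ isT hc).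
rewrite expectation_pbar_histories -EFinM -EFinD; congr (_%:E).
under eq_bigr => s _ do rewrite mulrDl -mulrA.
by rewrite big_split /= -!mulr_sumr sum_hist_prob mulr1.
Qed.

Lemma expectation_pbar_const n (p : R) : (0 < n)%N ->
  (forall i, (i < n)%N -> 'E_P[r i.+1] = p%:E)%E ->
  ('E_P[mean n] = p%:E)%E.
Proof.
move=> n0 hE.
have int_r (i : 'I_n) : (\int[P]_x (r i.+1 x)%:E = p%:E)%E.
  by have := hE i (ltn_ord i); rewrite unlock.
rewrite unlock /pbar.
under eq_integral => w _ do rewrite mulrC EFinM -sumEFin.
have r_ge0 i w : (0 <= (r i.+1 w)%:E)%E.
  by rewrite lee_fin; case: (r01 i.+1 w isT) => ->.
rewrite ge0_integralZl_EFin //; last 2 first.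
- by move=> w _; apply: sume_ge0.
- by apply: emeasurable_sum => i; apply/measurable_EFinP; exact: measurable_funPT.
rewrite ge0_integral_sum //; last first.
  by move=> i; apply/measurable_EFinP; exact: measurable_funPT.
under eq_bigr => i _ do rewrite int_r.
rewrite sumEFin sumr_const card_ord -EFinM; congr (_%:E).
by rewrite -[p *+ n]mulr_natr mulrC mulfK // pnatr_eq0 -lt0n.
Qed.

End BinaryRatings.

Arguments expectation_rating_affine {d T R P r} r01 n a b.
Arguments expectation_pbar_const {d T R P r} r01 n p.

Theorem theoremA1 (d : measure_display) (T : measurableType d) (R : realType)
  (P : probability T R) (p : R) (lam : nat -> R) (r : nat -> {RV P >-> R}) :
  0 < p < 1 ->
  lam 1%N = 1 ->
  (forall n, (1 < n)%N -> 0 <= lam n /\ lam n <= lam n.-1) ->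
  (forall n w, (1 <= n)%N -> r n w = 0 \/ r n w = 1) ->
  P [set w | r 1%N w = 1] = p%:E ->
  (forall n, (2 <= n)%N -> forall s : seq bool, size s = n.-1 ->
     P (hist_event (fun k => (r k : T -> R)) s `&` [set w | r n w = 1]) =
     ((lam n * p + (1 - lam n) * seq_mean s)%:E * P (hist_event (fun k => (r k : T -> R)) s))%E) ->
  forall n, (1 <= n)%N ->
    ('E_P[pbar (fun k => (r k : T -> R)) n] = p%:E /\ 'E_P[r n] = p%:E)%E.
Proof.
move=> _ _ _ r01 r1_prob r_cond.
have Er n : (1 <= n)%N -> ('E_P[r n] = p%:E)%E.
  elim/ltn_ind: n => -[|[|n]] IH // _.
  - rewrite (expectation_rating_affine r01 0 p 0) ?mul0e ?adde0 //.
    move=> s /size0nil ->.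
    by rewrite hist_event_nil setTI probability_setT mule1 mul0r addr0 r1_prob.
  - rewrite (expectation_rating_affine r01 n.+1 (lam n.+2 * p) (1 - lam n.+2));
      last by move=> s hs; apply: r_cond.
    rewrite (expectation_pbar_const r01 n.+1 p) // => [|i ilt]; last exact: IH.
    by rewrite -EFinM -EFinD mulrBl mul1r addrC subrK.
move=> n n1; split; last exact: Er.
by apply: (expectation_pbar_const r01 n p n1) => i _; exact: Er.
Qed.
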